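(* Let $\mathcal{T}$ be a single-elimination tournament with at least $2$ vertices and $u\in V(\mathcal{T})$. If there is no $x\in N^+(u)$ with $N^-(x)=\{a,u\}$ for some player $a\in P(\mathcal{T})$, then there exists a partition $\mathcal{A}$ of $P(\mathcal{T})\setminus P(u)$ such that: (i) for all $A\in\mathcal{A}$ and $a\in A$, there exists $b\in A\setminus\{a\}$ such that $b\in P(x)$ for every match $x$ with $a\in P(x)$; and (ii) $|\mathcal{A}|=\sum_{x\in M(\mathcal{T})\setminus V(\mathcal{T}_u)}\left\lfloor \frac{|N^-(x)\cap (P(\mathcal{T})\setminus P(u))|}{2}\right\rfloor$.
   Context: A single-elimination tournament is a finite directed graph $\mathcal{T}$ such that: (a) $\mathcal{T}$ has exactly one sink (vertex with no out-neighbours); (b) every non-sink vertex has exactly one out-neighbour; (c) $\mathcal{T}$ has no directed cycles; (d) $|N^-(v)|\ne 1$ for every vertex $v$, where $N^-(v)$ (resp. $N^+(v)$) denotes the set of in-neighbours (resp. out-neighbours) of $v$. The players $P(\mathcal{T})$ are the sources and the matches are $M(\mathcal{T})=V(\mathcal{T})\setminus P(\mathcal{T})$. For a vertex $u$, $P(u)$ is the set of players $a$ for which there is a directed walk from $a$ to $u$ (length $0$ allowed). For $u\in V(\mathcal{T})$, $\mathcal{T}_u$ is the digraph obtained from $\mathcal{T}$ by deleting every vertex $v$ with $P(v)\not\subseteq P(u)$. *)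

From mathcomp Require Import all_boot.
Set Implicit Arguments. Unset Strict Implicit. Unset Printing Implicit Defensive.

Section SET.
Variables (V : finType) (e : rel V).

Definition in_nb (v : V) : {set V} := [set w | e w v].
Definition out_nb (v : V) : {set V} := [set w | e v w].

Definition is_sink (v : V) : bool := out_nb v == set0.

Definition single_elim : Prop :=
  [/\ #|[set v | is_sink v]| = 1,
      (forall v, ~~ is_sink v -> #|out_nb v| = 1),
      (* no directed cycles (including loops) *)
      (forall x y, e x y -> ~~ connect e y x)
    & (forall v, #|in_nb v| != 1)].

Definition players : {set V} := [set v | in_nb v == set0].
Definition matches : {set V} := ~: players.

Definition Pl (u : V) : {set V} := [set a in players | connect e a u].

Definition VT (u : V) : {set V} := [set v | Pl v \subset Pl u].

End SET.

From mathcomp Require Import all_boot.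
Set Implicit Arguments. Unset Strict Implicit. Unset Printing Implicit Defensive.

(* Let Q be the players outside P(u). The parent x of a player of Q is a match
   not below u, and pairing up the Q-players among the in-neighbours of x gives
   floor(|N^-(x) ∩ Q| / 2) blocks of siblings; two siblings lie in P(y) for the
   same matches y. If x has an odd number >= 3 of such players, the unpaired
   one joins a pair of its siblings. If it is the only one, the hypothesis on u
   lets us descend from x through matches not below u until we meet a match
   with two Q-players among its in-neighbours, and the lone player joins one of
   their blocks, all of whose members lie in P(x). *)

Lemma acyclic_ind (T : finType) (r : rel T) :
  (forall x y, r x y -> ~~ connect r y x) -> forall P : T -> Prop,
  (forall v, (forall w, r w v -> P w) -> P v) -> forall v, P v.
Proof.
move=> acyclic P IH v; have [n] := ubnP #|[set z | connect r z v]|.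
elim: n v => // n IHn v lt_v; apply: IH => w rwv; apply: IHn.
rewrite ltnS in lt_v; apply: leq_trans lt_v; apply: proper_card; apply/properP; split.
  by apply/subsetP=> z; rewrite !inE => /connect_trans; apply; apply: connect1.
by exists v; rewrite !inE ?connect0 ?acyclic.
Qed.

Lemma count_odd_iota n : count odd (iota 0 n) = n./2.
Proof.
elim: n => // n IHn; rewrite -addn1 iotaD count_cat IHn /= addn0 addn1.
by rewrite [RHS]uphalf_half addnC.
Qed.

Lemma count_odd_index (T : eqType) (s : seq T) :
  uniq s -> count (fun a => odd (index a s)) s = (size s)./2.
Proof.
case: s => // x0 s'; set s := x0 :: s' => uniq_s.
rewrite -(count_map (index^~ s)) -count_odd_iota; congr count.
rewrite -[X in map _ X](mkseq_nth x0) /mkseq -map_comp -[RHS]map_id.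
by apply/eq_in_map => i; rewrite mem_iota => /andP[_ lt_i]; apply: index_uniq.
Qed.

Lemma card_odd_index (T : finType) (S : {set T}) :
  #|[set a in S | odd (index a (enum S))]| = #|S|./2.
Proof.
rewrite [#|S|]cardE -(count_odd_index (enum_uniq S)) -size_filter.
rewrite -(card_uniqP (filter_uniq _ (enum_uniq S))).
by apply: eq_card => a; rewrite inE mem_filter mem_enum andbC.
Qed.

Lemma card_preim_partition (aT rT : finType) (f : aT -> rT) (D : {set aT}) :
  #|preim_partition f D| = #|f @: D|.
Proof.
pose block t := [set y in D | t == f y].
rewrite -[preim_partition f D]/((block \o f) @: D) imset_comp card_in_imset //.
move=> _ _ /imsetP[x1 Dx1 ->] /imsetP[x2 Dx2 ->] /setP/(_ x1).
by rewrite !inE Dx1 eqxx => /esym/eqP.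
Qed.

Section SingleElimination.
Variables (V : finType) (e : rel V).
Hypothesis tournament : single_elim e.

Lemma arc_acyclic x y : e x y -> ~~ connect e y x.
Proof. by case: tournament => _ _ acyclic _; apply: acyclic. Qed.

Lemma exists_player_connect v : exists2 a, a \in players e & connect e a v.
Proof.
elim/(acyclic_ind arc_acyclic): v => v IH.
have [player_v|] := boolP (v \in players e); first by exists v.
rewrite inE => /set0Pn[w]; rewrite inE => ewv.
have [a player_a caw] := IH w ewv.
by exists a => //; apply: connect_trans caw (connect1 ewv).
Qed.

Lemma exists_sink_connect v : exists2 s, is_sink e s & connect e v s.
Proof.
have coarc_acyclic x y : e y x -> ~~ connect [rel x y | e y x] y x.
  by rewrite connect_rev; apply: arc_acyclic.
elim/(acyclic_ind coarc_acyclic): v => v IH.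
have [sink_v|] := boolP (is_sink e v); first by exists v.
rewrite /is_sink => /set0Pn[w]; rewrite inE => evw.
have [s sink_s cws] := IH w evw.
by exists s => //; apply: connect_trans (connect1 evw) cws.
Qed.

Lemma player_connect a x : a \in players e -> connect e x a -> x = a.
Proof.
move=> player_a /connectP[p]; case/lastP: p => [|p c] /=; first by move=> _ ->.
rewrite rcons_path last_rcons => /andP[_ ec] eq_ac; move: player_a; rewrite eq_ac.
by rewrite inE => /eqP/setP/(_ (last x p)); rewrite !inE ec.
Qed.

Lemma in_nb_gt1 z : z \notin players e -> 1 < #|in_nb e z|.
Proof.
rewrite inE -card_gt0; case: tournament => _ _ _ /(_ z).
by case: #|_| => [|[|]].
Qed.

Lemma exists_other_in_arc z c : z \notin players e -> exists2 c', e c' z & c' != c.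
Proof.
move=> /in_nb_gt1/card_gt1P[c1 [c2 [+ + ne12]]]; rewrite !inE => e1 e2.
by have [eq1c|] := eqVneq c1 c; [exists c2; rewrite // -eq1c eq_sym | exists c1].
Qed.

Definition parent v := odflt v [pick w | e v w].

Lemma parentP v w : e v w -> parent v = w.
Proof.
move=> evw; rewrite /parent; case: pickP => [w' evw' /=|/(_ w)]; last by rewrite evw.
case: tournament => _ out1 _ _.
have /out1/eqP/cards1P[z out_v] : ~~ is_sink e v.
  by apply/set0Pn; exists w; rewrite inE.
have : w \in out_nb e v by rewrite inE.
have : w' \in out_nb e v by rewrite inE.
by rewrite out_v !inE => /eqP -> /eqP ->.
Qed.

Lemma connect_parent x y : connect e x y -> x != y -> connect e (parent x) y.
Proof.
case/connectP=> [[|z p]] /=; first by move=> _ ->; rewrite eqxx.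
by case/andP=> exz pth last_y _; rewrite (parentP exz); apply/connectP; exists p.
Qed.

Lemma connect_comparable a y z :
  connect e a y -> connect e a z -> connect e y z || connect e z y.
Proof.
case/connectP=> p; elim: p a => [|w p IH] a /=; first by move=> _ -> ->.
case/andP=> eaw pth last_y caz; have [<-|neq_az] := eqVneq a z.
  by apply/orP; right; apply/connectP; exists (w :: p); rewrite //= eaw.
by apply: (IH w pth last_y); rewrite -(parentP eaw); apply: connect_parent.
Qed.

Lemma sibling_connect c c' z : e c z -> e c' z -> connect e c c' -> c = c'.
Proof.
move=> ecz ec'z cc'; apply/eqP; apply: contraT => neq_cc'.
by have := connect_parent cc' neq_cc'; rewrite (parentP ecz) (negbTE (arc_acyclic ec'z)).
Qed.

Lemma last_arc x y : connect e x y -> x != y -> exists2 c, e c y & connect e x c.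
Proof.
case/connectP=> p; case/lastP: p => [|p z] /=; first by move=> _ ->; rewrite eqxx.
rewrite rcons_path last_rcons => /andP[pth ez] -> _.
by exists (last x p) => //; apply/connectP; exists p.
Qed.

Lemma in_Pl a x : (a \in Pl e x) = (a \in players e) && connect e a x.
Proof. by rewrite inE. Qed.

Lemma Pl_subset_connect v w : (Pl e v \subset Pl e w) = connect e v w.
Proof.
apply/idP/idP=> [sub_vw|cvw]; last first.
  by apply/subsetP=> a; rewrite !in_Pl => /andP[-> /connect_trans]; apply.
have [a player_a cav] := exists_player_connect v.
have /subsetP/(_ a) := sub_vw; rewrite !in_Pl player_a cav => /(_ isT) caw.
case/orP: (connect_comparable cav caw) => // cwv; apply: contraT => ncvw.
have neq_wv : w != v by apply: contraNneq ncvw => ->.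
have [c ecv cwc] := last_arc cwv neq_wv.
have match_v : v \notin players e by rewrite inE; apply/set0Pn; exists c; rewrite inE.
have [c' ec'v neq_c'c] := exists_other_in_arc c match_v.
have [b player_b cbc'] := exists_player_connect c'.
have /subsetP/(_ b) := sub_vw; rewrite !in_Pl player_b.
rewrite (connect_trans cbc' (connect1 ec'v)) => /(_ isT) cbw.
have cbc := connect_trans cbw cwc.
case/orP: (connect_comparable cbc cbc') => /sibling_connect.
  by move=> /(_ _ ecv ec'v) eq_cc'; rewrite eq_cc' eqxx in neq_c'c.
by move=> /(_ _ ec'v ecv) eq_c'c; rewrite eq_c'c eqxx in neq_c'c.
Qed.

Lemma player_parent_arc a : 1 < #|V| -> a \in players e -> e a (parent a).
Proof.
move=> card_V player_a; have [v neq_va] : exists v, v != a.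
  apply/existsP; apply: contraLR card_V => /existsPn all_a.
  by rewrite -leqNgt (@eq_card1 _ a) // => v; have := all_a v; rewrite negbK.
have [s sink_s cvs] := exists_sink_connect v.
have : ~~ is_sink e a.
  apply: contra neq_va => sink_a.
  case: tournament => /eqP/cards1P[t sinks] _ _ _.
  have : s \in [set v | is_sink e v] by rewrite inE.
  have : a \in [set v | is_sink e v] by rewrite inE.
  rewrite sinks !inE => /eqP eq_at /eqP eq_st; move: cvs.
  by rewrite eq_st -eq_at => /(player_connect player_a) ->.
by rewrite /is_sink => /set0Pn[w]; rewrite inE => eaw; rewrite (parentP eaw).
Qed.

Lemma Pl_parent_subset a x :
  a \in players e -> x \in matches e -> a \in Pl e x -> Pl e (parent a) \subset Pl e x.
Proof.
move=> player_a match_x; rewrite in_Pl player_a Pl_subset_connect => /connect_parent.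
by apply; apply: contraTneq match_x => <-; rewrite inE negbK.
Qed.

Variable u : V.

Definition outer := players e :\: Pl e u.
Definition outer_in x := in_nb e x :&: outer.

Lemma in_outer a : (a \in outer) = (a \in players e) && ~~ connect e a u.
Proof. by rewrite in_setD in_Pl andbC; case: (a \in players e). Qed.

Lemma in_outer_in a x : (a \in outer_in x) = e a x && (a \in outer).
Proof. by rewrite in_setI inE. Qed.

Lemma parent_outer_in x a : a \in outer_in x -> parent a = x.
Proof. by rewrite in_outer_in => /andP[/parentP]. Qed.

Lemma Pl_outer_in x a : a \in outer_in x -> a \in Pl e x.
Proof. by rewrite in_outer_in in_outer in_Pl => /and3P[/connect1 cax -> _]. Qed.

Hypothesis card_V : 1 < #|V|.

Lemma outer_in_parent a : a \in outer -> a \in outer_in (parent a).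
Proof.
move=> outer_a; rewrite in_outer_in outer_a andbT.
by apply: player_parent_arc; move: outer_a; rewrite in_outer => /andP[].
Qed.

Lemma outer_parent_match a : a \in outer -> parent a \in matches e.
Proof.
move/outer_in_parent; rewrite in_outer_in => /andP[eax _].
by rewrite !inE; apply/set0Pn; exists a; rewrite inE.
Qed.

Lemma outer_parent_far a : a \in outer -> ~~ connect e (parent a) u.
Proof.
move=> outer_a; have := outer_in_parent outer_a.
rewrite in_outer_in in_outer => /and3P[eax _ far_a].
by apply: contraNN far_a => /(connect_trans (connect1 eax)).
Qed.

Hypothesis no_lone_player_with_u :
  ~ (exists x a, x \in out_nb e u /\ a \in players e /\ in_nb e x = [set a; u]).

(* An in-neighbour of [z] below [u] must be [u] itself, so if all the others
   were players, N^-(z) would be {l, u} for the single player l of [outer_in z]. *)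
Lemma exists_far_match_in_arc z :
  z \in matches e -> ~~ connect e z u -> #|outer_in z| < 2 ->
  exists2 c, e c z & (c \in matches e) && ~~ connect e c u.
Proof.
move=> match_z far_z small_z.
case: (pickP [pred c | e c z && (c \in matches e) && ~~ connect e c u]).
  by move=> c /= /andP[/andP[ecz match_c] far_c]; exists c; rewrite ?match_c.
move=> no_far_match; exfalso; apply: no_lone_player_with_u.
have sub_z : in_nb e z \subset outer_in z :|: [set u].
  apply/subsetP=> c; rewrite inE => ecz; rewrite in_setU in_set1 in_outer_in ecz.
  have [cu|far_c] := boolP (connect e c u).
    apply/orP; right; apply: contraNT far_z => neq_cu.
    by rewrite -(parentP ecz); apply: connect_parent.
  have := no_far_match c; rewrite /= ecz far_c andbT in_outer far_c andbT.
  by rewrite inE => /negbFE ->.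
have gt1_z : 1 < #|in_nb e z| by apply: in_nb_gt1; rewrite inE in match_z.
have /cards1P[l outer_z] : #|outer_in z| == 1.
  rewrite eqn_leq -ltnS small_z -(leq_add2r 1) addn1.
  apply: leq_trans gt1_z _; apply: leq_trans (subset_leq_card sub_z) _.
  by rewrite -(cards1 u) leq_card_setU.
have : l \in outer_in z by rewrite outer_z set11.
rewrite in_outer_in in_outer => /and3P[_ player_l _].
have in_z : in_nb e z = [set l; u].
  apply/eqP; rewrite eqEcard cards2 -[[set l; u]]/(_ :|: _) -outer_z sub_z /=.
  by apply: leq_trans gt1_z; case: (l != u).
have : u \in in_nb e z by rewrite in_z in_set2 eqxx orbT.
by rewrite inE => euz; exists z, l; rewrite inE euz.
Qed.

Lemma exists_rich_below z :
  z \in matches e -> ~~ connect e z u -> exists2 z', connect e z' z & 1 < #|outer_in z'|.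
Proof.
elim/(acyclic_ind arc_acyclic): z => z IH match_z far_z.
have [rich|poor] := ltnP 1 #|outer_in z|; first by exists z.
have [c ecz /andP[match_c far_c]] := exists_far_match_in_arc match_z far_z poor.
have [z' cz'c rich'] := IH c ecz match_c far_c.
by exists z' => //; apply: connect_trans cz'c (connect1 ecz).
Qed.

Definition heads := [set a in outer | odd (index a (enum (outer_in (parent a))))].

Lemma in_heads a :
  (a \in heads) = (a \in outer) && odd (index a (enum (outer_in (parent a)))).
Proof. by rewrite /heads in_set. Qed.

Lemma head_outer h : h \in heads -> h \in outer.
Proof. by rewrite in_heads => /andP[]. Qed.

Lemma nth_outer_in x a j : j < #|outer_in x| -> nth a (enum (outer_in x)) j \in outer_in x.
Proof. by move=> lt_j; rewrite -mem_enum mem_nth // -cardE. Qed.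

Lemma index_nth_outer_in x a j :
  j < #|outer_in x| -> index (nth a (enum (outer_in x)) j) (enum (outer_in x)) = j.
Proof. by move=> lt_j; rewrite index_uniq ?enum_uniq // -cardE. Qed.

Lemma head_nth_outer_in x a j :
  j < #|outer_in x| -> (nth a (enum (outer_in x)) j \in heads) = odd j.
Proof.
move=> lt_j; have in_x := nth_outer_in a lt_j.
rewrite in_heads (parent_outer_in in_x) index_nth_outer_in //.
by move: in_x; rewrite in_outer_in => /andP[_ ->].
Qed.

Lemma exists_head_below a :
  a \in outer -> #|outer_in (parent a)| < 2 ->
  exists h, [/\ h \in heads, h \in Pl e (parent a) & h != a].
Proof.
move=> outer_a poor.
have [z cz rich] :=
  exists_rich_below (outer_parent_match outer_a) (outer_parent_far outer_a).
have in_h := nth_outer_in a rich; set h := nth a _ 1 in in_h.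
exists h; split; first by rewrite head_nth_outer_in.
  by apply: subsetP (Pl_outer_in in_h); rewrite Pl_subset_connect.
apply: contraTneq poor => eq_ha; rewrite -leqNgt -eq_ha (parent_outer_in in_h).
exact: rich.
Qed.

(* The players of [outer_in x] are paired along [enum (outer_in x)], each pair
   headed by its odd-indexed member; when there are at least three of them, a
   last unpaired player joins the previous pair, and a lone player joins a
   head further down, provided by [exists_head_below]. *)
Definition block a :=
  let s := enum (outer_in (parent a)) in
  let i := index a s in
  let j := if i.+1 < size s then i.+1 else i.-1 in
  if odd i then a
  else if odd j then nth a s j
  else odflt a [pick h in heads | (h \in Pl e (parent a)) && (h != a)].

Lemma block_head h : h \in heads -> block h = h.
Proof. by rewrite in_heads /block => /andP[_ ->]. Qed.

Lemma block_non_head a :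
  a \in outer -> a \notin heads -> (block a \in heads) && (block a \in Pl e (parent a)).
Proof.
move=> outer_a not_head; rewrite /block.
set x := parent a; set s := enum (outer_in x); set i := index a s.
have even_i : ~~ odd i by move: not_head; rewrite in_heads outer_a.
have lt_i : i < #|outer_in x| by rewrite cardE index_mem mem_enum outer_in_parent.
set j := if i.+1 < size s then i.+1 else i.-1.
have lt_j : j < #|outer_in x|.
  rewrite /j cardE; case: ifP => // _.
  by apply: leq_ltn_trans (leq_pred i) _; rewrite -cardE.
rewrite (negbTE even_i); case: ifP => [odd_j|even_j].
  by rewrite head_nth_outer_in // odd_j Pl_outer_in // nth_outer_in.
have poor : #|outer_in x| < 2.
  move: even_j lt_i; rewrite /j cardE -/s.
  case: ifP => [_|/negbT]; first by rewrite /= even_i.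
  by rewrite -leqNgt; case: (i) even_i => [|[|k]] //=; rewrite !negbK => ->.
case: pickP => [h /andP[head_h /andP[Pl_h _]] | no_head] /=; first by rewrite head_h.
have [h [head_h Pl_h neq_ha]] := exists_head_below outer_a poor.
by have := no_head h; rewrite /= head_h Pl_h neq_ha.
Qed.

Lemma head_partner h :
  h \in heads ->
  exists b, [/\ b \in outer, b \notin heads, block b = h & parent b = parent h].
Proof.
rewrite in_heads => /andP[outer_h odd_i].
set x := parent h in odd_i *; set s := enum (outer_in x) in odd_i *.
set i := index h s in odd_i.
have lt_i : i < #|outer_in x| by rewrite cardE index_mem mem_enum outer_in_parent.
have i_gt0 : 0 < i by case: (i) odd_i.
have lt_i1 : i.-1 < #|outer_in x| by apply: leq_ltn_trans (leq_pred i) lt_i.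
have in_b := nth_outer_in h lt_i1; set b := nth h s i.-1 in in_b.
have par_b : parent b = x := parent_outer_in in_b.
have even_i1 : odd i.-1 = false by move: odd_i; rewrite -(prednK i_gt0) /= => /negbTE.
exists b; split=> //.
- by move: in_b; rewrite in_outer_in => /andP[].
- by rewrite head_nth_outer_in // even_i1.
have lt_is : i < size s by rewrite -cardE.
rewrite /block par_b -/s index_nth_outer_in // even_i1 prednK // lt_is odd_i.
by rewrite (set_nth_default h) ?nth_index // mem_enum; apply: outer_in_parent.
Qed.

Lemma exists_block_mate a :
  a \in outer ->
  exists b, [/\ b \in outer, b != a, block b = block a & b \in Pl e (parent a)].
Proof.
move=> outer_a; have [head_a|not_head] := boolP (a \in heads).
  have [b [outer_b not_head_b block_b par_b]] := head_partner head_a.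
  exists b; split=> //; first by apply: contraNneq not_head_b => ->.
    by rewrite block_b block_head.
  by rewrite -par_b Pl_outer_in // outer_in_parent.
have /andP[head_b Pl_b] := block_non_head outer_a not_head.
exists (block a); split=> //; first exact: head_outer.
  by apply: contraNneq not_head => <-.
by rewrite block_head.
Qed.

Lemma block_image : block @: outer = heads.
Proof.
apply/setP=> h; apply/imsetP/idP => [[a outer_a ->]|head_h].
  have [head_a|/(block_non_head outer_a)/andP[] //] := boolP (a \in heads).
  by rewrite block_head.
by exists h; rewrite ?block_head ?head_outer.
Qed.

Lemma card_heads : #|heads| = \sum_(x in matches e :\: VT e u) #|outer_in x|./2.
Proof.
rewrite -sum1_card (partition_big parent (mem (matches e :\: VT e u))); last first.
  move=> h /head_outer outer_h; rewrite /= in_setD outer_parent_match // andbT.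
  by rewrite inE Pl_subset_connect outer_parent_far.
apply: eq_bigr => x _; rewrite sum1dep_card -card_odd_index; apply: eq_card => a.
rewrite in_set [in RHS]in_set in_heads.
apply/andP/andP=> [[/andP[outer_a odd_a] /eqP <-]|].
  by rewrite outer_in_parent.
case=> in_a odd_a; rewrite (parent_outer_in in_a) odd_a.
by move: in_a; rewrite in_outer_in => /andP[_ ->].
Qed.

End SingleElimination.

Theorem lemma5p12 (V : finType) (e : rel V) (u : V) :
  single_elim e -> 1 < #|V| ->
  ~ (exists x a, x \in out_nb e u /\ a \in players e /\ in_nb e x = [set a; u]) ->
  exists Ap : {set {set V}},
    [/\ partition Ap (players e :\: Pl e u),
        (forall A a, A \in Ap -> a \in A ->
           exists2 b, b \in A :\ a &
             forall x, x \in matches e -> a \in Pl e x -> b \in Pl e x)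
      & #|Ap| = \sum_(x in matches e :\: VT e u)
                  (#|in_nb e x :&: (players e :\: Pl e u)|)./2].
Proof.
move=> tournament card_V no_lone.
exists (preim_partition (block e u) (outer e u)); split.
- exact: preim_partitionP.
- move=> _ a /imsetP[a0 _ ->]; rewrite in_set => /andP[outer_a /eqP same_block].
  have [b [outer_b neq_ba block_b Pl_b]] :=
    exists_block_mate tournament card_V no_lone outer_a.
  exists b; first by rewrite in_setD1 neq_ba in_set outer_b same_block block_b eqxx.
  move=> x match_x Pl_a; apply: subsetP Pl_b.
  by apply: Pl_parent_subset => //; move: outer_a; rewrite in_outer => /andP[].
- rewrite card_preim_partition (block_image tournament card_V no_lone).
  exact: card_heads.
Qed.
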